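(* Let $0<\varepsilon<1$ and let $E^1=\{uv: \varepsilon w_v<w_u<w_v/\varepsilon\}$ (unordered pairs, $u=v$ allowed) and $N^1_u=\{v\in V: uv\in E^1\}$. Let $\mathcal C'$ be any clustering of $V$ that does not split any atom and such that for every $u\in V$ and every $C\in\mathcal C'$ with $K_u\subsetneq C$ we have $w(u,C)>\frac{|C|}2+\varepsilon w_u$. Then for every $C\in\mathcal C'$ and any $u,v\in C$ with $v\notin K_u$, $$\sum_{p\in N^1_u\cap N^1_v}w_{up}w_{vp}>\varepsilon(w_u+w_v).$$
   Context: A Correlation Clustering instance consists of a finite vertex set $V$ and a partition $E^+\uplus E^-=\binom V2$ of unordered pairs of distinct vertices into $+$edges and $-$edges. $\mathcal K$ is a partition of $V$ into atoms, and every pair of distinct vertices in a common atom is a $+$edge. For $u\in V$, $K_u$ is the atom containing $u$ and $k_u=|K_u|$. For $u,v\in V$ (possibly equal), $w_{uv}=\frac1{k_uk_v}\sum_{u'\in K_u,v'\in K_v}\mathbf 1[u'v'\text{ is a }+\text{edge or }u'=v']\in[0,1]$; for $V'\subseteq V$, $w(u,V')=\sum_{v\in V'}w_{uv}$, and $w_u=w(u,V)$. *)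

From HB Require Import structures.
From mathcomp Require Import all_boot all_order all_algebra.
Set Implicit Arguments. Unset Strict Implicit. Unset Printing Implicit Defensive.
Import Order.TTheory GRing.Theory Num.Theory.
Local Open Scope ring_scope.

(* Correlation clustering instance: vertex set = finite type V,
   plus : rel V gives the +edges (meaningful on distinct pairs; symmetric),
   K : {set {set V}} is the partition into atoms. *)
Section CC.
Variables (R : realFieldType) (V : finType) (plus : rel V) (K : {set {set V}}).

Definition atom (u : V) : {set V} := pblock K u.
Definition katom (u : V) : nat := #|atom u|.

Definition wgt (u v : V) : R :=
  (katom u * katom v)%:R^-1 *
  \sum_(u' in atom u) \sum_(v' in atom v)
     (if plus u' v' || (u' == v') then 1 else 0).

Definition wset (u : V) (V' : {set V}) : R := \sum_(v in V') wgt u v.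

Definition wdeg (u : V) : R := wset u [set: V].

Definition N1 (eps : R) (u : V) : {set V} :=
  [set v | (eps * wdeg v < wdeg u) && (wdeg u < wdeg v / eps)].
End CC.

Definition cc_instance (V : finType) (plus : rel V) (K : {set {set V}}) :=
  [/\ symmetric plus,
      partition K [set: V] &
      forall A, A \in K -> forall x y, x \in A -> y \in A -> x != y -> plus x y].

From HB Require Import structures.
From mathcomp Require Import all_boot all_order all_algebra.
From mathcomp Require Import lra.
Set Implicit Arguments. Unset Strict Implicit. Unset Printing Implicit Defensive.
Import Order.TTheory GRing.Theory Num.Theory.
Local Open Scope ring_scope.

(* Since [u] and [v] lie in different atoms of [C], no atom fills [C], so the
   hypothesis gives [w(x, C) > |C|/2 + eps w_x] for every [x] in [C].  As
   [w(x, C) <= |C|] and [w(x, C) <= w_x], this yields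
   [eps w_p < |C|/2 < w_x] for all [x, p] in [C], i.e. [C] lies in [N^1_u] and
   in [N^1_v].  Finally [ab >= a + b - 1] for [a, b <= 1], so the sum over [C]
   alone is at least [w(u, C) + w(v, C) - |C| > eps (w_u + w_v)]. *)

Lemma ler_sum_subset (R : numDomainType) (T : finType) (A B : {set T})
    (F : T -> R) :
  A \subset B -> (forall x, 0 <= F x) ->
  \sum_(x in A) F x <= \sum_(x in B) F x.
Proof.
move=> sAB F_ge0; rewrite [X in _ <= X](big_setID A) /= (setIidPr sAB).
by rewrite lerDl; apply: sumr_ge0.
Qed.

Lemma addrB1_le_mul (R : realDomainType) (a b : R) :
  a <= 1 -> b <= 1 -> a + b - 1 <= a * b.
Proof.
move=> a_le1 b_le1.
have : 0 <= (1 - a) * (1 - b) by rewrite mulr_ge0 ?subr_ge0.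
lra.
Qed.

Section Weights.
Variables (R : realFieldType) (V : finType) (plus : rel V) (K : {set {set V}}).

Local Notation w := (wgt R plus K).
Local Notation wset := (wset R plus K).
Local Notation wdeg := (wdeg R plus K).

Lemma wgt_ge0 u v : 0 <= w u v.
Proof.
rewrite /wgt mulr_ge0 ?invr_ge0 ?ler0n //.
by apply: sumr_ge0 => i _; apply: sumr_ge0 => j _; case: ifP.
Qed.

Lemma wgt_le1 u v : w u v <= 1.
Proof.
rewrite /wgt; have [->|k_gt0] := posnP (katom K u * katom K v).
  by rewrite invr0 mul0r ler01.
rewrite mulrC ler_pdivrMr ?ltr0n // mul1r natrM /katom.
have -> : (#|atom K u|%:R * #|atom K v|%:R : R) =
    \sum_(u' in atom K u) \sum_(v' in atom K v) 1.
  by under [RHS]eq_bigr do rewrite sumr_const; rewrite sumr_const mulr_natl.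
by apply: ler_sum => i _; apply: ler_sum => j _; case: ifP.
Qed.

Lemma wdeg_ge0 u : 0 <= wdeg u.
Proof. by apply: sumr_ge0 => p _; apply: wgt_ge0. Qed.

Lemma wset_le_card u C : wset u C <= #|C|%:R.
Proof. by rewrite -sumr_const; apply: ler_sum => p _; apply: wgt_le1. Qed.

Lemma wset_le_wdeg u C : wset u C <= wdeg u.
Proof. by apply: ler_sum_subset; [apply: subsetT | apply: wgt_ge0]. Qed.

End Weights.

Section Clusters.
Variables (V : finType) (K C' : {set {set V}}).
Hypotheses (partK : partition K [set: V]) (trivC' : trivIset C').
Hypothesis atom_in_cluster :
  forall A, A \in K -> exists2 C, C \in C' & A \subset C.

Lemma atom_subset_cluster C x : C \in C' -> x \in C -> atom K x \subset C.
Proof.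
move=> CC' xC; have [/eqP covK _ _] := and3P partK.
have xK : x \in cover K by rewrite covK inE.
have [D DC' sAD] := atom_in_cluster (pblock_mem xK).
have xD : x \in D by apply: (subsetP sAD); rewrite mem_pblock.
by rewrite -(def_pblock trivC' CC' xC) (def_pblock trivC' DC' xD).
Qed.

Lemma atom_proper_cluster C u v x :
  C \in C' -> u \in C -> v \in C -> v \notin atom K u -> x \in C ->
  atom K x \proper C.
Proof.
move=> CC' uC vC vNu xC; rewrite properEneq atom_subset_cluster // andbT.
apply: contra vNu => /eqP atom_x.
have [_ trivK _] := and3P partK.
have ux : u \in atom K x by rewrite atom_x.
by rewrite /atom (same_pblock trivK ux) -/(atom K x) atom_x.
Qed.

End Clusters.

Section DenseCluster.
Variables (R : realFieldType) (V : finType) (plus : rel V) (K : {set {set V}}).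
Variables (eps : R) (C : {set V}).
Hypothesis eps_gt0 : 0 < eps.
Hypothesis dense :
  {in C, forall x, #|C|%:R / 2 + eps * wdeg R plus K x < wset R plus K x C}.

Local Notation w := (wgt R plus K).
Local Notation wdeg := (wdeg R plus K).

Lemma dense_scaled_wdeg_lt : {in C &, forall x p, eps * wdeg p < wdeg x}.
Proof.
move=> x p xC pC.
have := dense xC; have := dense pC.
have := wset_le_card R plus K p C; have := wset_le_wdeg R plus K x C.
have := mulr_ge0 (ltW eps_gt0) (wdeg_ge0 R plus K x); lra.
Qed.

Lemma dense_subset_N1 x : x \in C -> C \subset N1 plus K eps x.
Proof.
move=> xC; apply/subsetP => p pC; rewrite inE ltr_pdivlMr // ![_ * eps]mulrC.
by rewrite !dense_scaled_wdeg_lt.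
Qed.

Lemma dense_common_weight_gt u v : u \in C -> v \in C ->
  eps * (wdeg u + wdeg v) < \sum_(p in C) w u p * w v p.
Proof.
move=> uC vC; apply: (@lt_le_trans _ _ (\sum_(p in C) (w u p + w v p - 1))).
  rewrite sumrB big_split /= sumr_const.
  have := dense uC; have := dense vC; rewrite /wset; lra.
by apply: ler_sum => p _; rewrite addrB1_le_mul ?wgt_le1.
Qed.

End DenseCluster.

Theorem lemma11 (R : realFieldType) (V : finType) (plus : rel V)
  (K : {set {set V}}) (eps : R) (C' : {set {set V}}) :
  cc_instance plus K ->
  0 < eps -> eps < 1 ->
  partition C' [set: V] ->
  (* C' does not split any atom *)
  (forall A, A \in K -> exists2 C, C \in C' & A \subset C) ->
  (forall u C, C \in C' -> atom K u \proper C ->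
     wset R plus K u C > #|C|%:R / 2 + eps * wdeg R plus K u) ->
  forall C, C \in C' -> forall u v, u \in C -> v \in C -> v \notin atom K u ->
    \sum_(p in N1 plus K eps u :&: N1 plus K eps v)
        wgt R plus K u p * wgt R plus K v p
      > eps * (wdeg R plus K u + wdeg R plus K v).
Proof.
move=> [_ partK _] eps_gt0 _ /and3P[_ trivC' _] atom_in_cluster heavy
  C CC' u v uC vC vNu.
have dense x : x \in C ->
    #|C|%:R / 2 + eps * wdeg R plus K x < wset R plus K x C.
  move=> xC; apply: heavy => //.
  exact: (atom_proper_cluster partK trivC' atom_in_cluster CC' uC vC vNu xC).
have sCN : C \subset N1 plus K eps u :&: N1 plus K eps v.
  by rewrite subsetI !(dense_subset_N1 eps_gt0 dense).
apply: lt_le_trans (dense_common_weight_gt dense uC vC) _.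
by apply: ler_sum_subset sCN _ => p; rewrite mulr_ge0 ?wgt_ge0.
Qed.
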